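(* Let $G$ be a finite simple graph with $n\ge4$ vertices such that every induced subgraph of $G$ on four vertices contains $K_{1,3}$ as a (not necessarily induced) subgraph. Then $G$ contains $K_{n-3}+\epsilon_3$ as a subgraph.
   Context: $K_{1,3}$ is the star with one center and three leaves; $\epsilon_3$ is the graph with three vertices and no edges; $K_{n-3}+\epsilon_3$ is obtained from disjoint copies of the complete graph $K_{n-3}$ and $\epsilon_3$ by adding all edges between them. *)

From mathcomp Require Import all_boot.
Set Implicit Arguments. Unset Strict Implicit. Unset Printing Implicit Defensive.

Definition simple_graph (V : finType) (e : rel V) : Prop :=
  symmetric e /\ irreflexive e.

Definition contains_subgraph (V1 V2 : finType) (e1 : rel V1) (e2 : rel V2) : Prop :=
  exists f : V1 -> V2, injective f /\ forall x y, e1 x y -> e2 (f x) (f y).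

Definition induced_vertices (V : finType) (S : {set V}) : finType :=
  {x : V | x \in S}.
Definition induced (V : finType) (e : rel V) (S : {set V}) : rel (induced_vertices S) :=
  fun x y => e (val x) (val y).

(* The star K_{1,3}: center 0, leaves 1,2,3. *)
Definition K13_rel : rel 'I_4 :=
  fun x y => (x != y) && ((val x == 0) || (val y == 0)).

(* K_m + eps_3: complete graph on 'I_m joined to the empty graph on 'I_3. *)
Definition Kjoin_eps3_rel (m : nat) : rel ('I_m + 'I_3) :=
  fun x y => match x, y with
             | inl a, inl b => a != b
             | inl _, inr _ => true
             | inr _, inl _ => true
             | inr _, inr _ => false
             end.
Arguments induced {V} e S.
Arguments Kjoin_eps3_rel m : clear implicits.

From mathcomp Require Import all_boot.

(* Call a vertex universal when it is adjacent to every other vertex.  The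
   proof has two independent halves.

   Combinatorial half: if every 4-set induces a graph containing K_{1,3},
   then every 4-set S has a vertex adjacent to the three others of S, so no
   4-set is covered by non-edges (each vertex having a non-neighbour inside
   the set).  Given a non-edge ab, every other non-universal vertex x must be
   non-adjacent to a or b (otherwise x, its non-neighbour d, a and b would
   form a covered 4-set), and two such x, y cannot coexist (a, b, x, y would
   be covered).  Hence at most 3 vertices are non-universal.

   Embedding half: m universal vertices together with 3 further vertices
   span a copy of K_m + eps_3.  Taking m = n - 3 gives the theorem. *)

Section Embedding.
Variables (V : finType) (e : rel V).
Hypothesis e_sym : symmetric e.

Lemma universal_join (U : {set V}) (m : nat) :
  (forall u v, u \in U -> u != v -> e u v) ->
  m <= #|U| -> m + 3 <= #|V| ->
  contains_subgraph (Kjoin_eps3_rel m) e.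
Proof.
move=> U_univ mU mV.
pose g1 (i : 'I_m) : V := enum_val (widen_ord mU i).
pose C := ~: [set g1 i | i in 'I_m].
have g1_inj : injective g1.
  by move=> i j /enum_val_inj/(congr1 val) ij; apply: val_inj.
have C3 : 3 <= #|C|.
  rewrite cardsCs setCK card_imset // card_ord leq_subRL //.
  by apply: leq_trans mV; rewrite leq_addr.
pose g2 (j : 'I_3) : V := enum_val (widen_ord C3 j).
have g2_inj : injective g2.
  by move=> i j /enum_val_inj/(congr1 val) ij; apply: val_inj.
have g1U i : g1 i \in U by apply: enum_valP.
have g2C j : g2 j \in C by apply: enum_valP.
have g12 i j : g1 i != g2 j.
  by apply: contraTneq (g2C j) => <-; rewrite inE imset_f.
pose f x := match x with inl i => g1 i | inr j => g2 j end.
exists f; split.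
  move=> [i|i] [j|j] /= fij.
  - by rewrite (g1_inj _ _ fij).
  - by move: (g12 i j); rewrite fij eqxx.
  - by move: (g12 j i); rewrite fij eqxx.
  - by rewrite (g2_inj _ _ fij).
move=> [i|i] [j|j] //= ij.
- by apply: U_univ; rewrite // (inj_eq g1_inj).
- exact: U_univ.
- by rewrite e_sym; apply: U_univ; rewrite // eq_sym.
Qed.

End Embedding.

Section ClawCondition.
Variables (V : finType) (e : rel V).
Hypothesis e_sym : symmetric e.
Hypothesis claw4 :
  forall S : {set V}, #|S| = 4 -> contains_subgraph K13_rel (induced e S).

(* The centre of the K_{1,3} inside a 4-set S is adjacent to the rest of S,
   since an embedding of K_{1,3} into a 4-vertex graph is onto. *)
Lemma claw_center {S : {set V}} :
  #|S| = 4 -> exists2 c, c \in S & forall y, y \in S -> y != c -> e c y.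
Proof.
move=> S4; have [f [f_inj f_edge]] := claw4 _ S4.
have [g fK gK] : bijective f.
  apply: (inj_card_bij f_inj).
  by rewrite card_ord /induced_vertices card_sig (eq_card (B := S)) // S4.
exists (val (f ord0)); first exact: valP.
move=> y yS yc; pose y' : induced_vertices S := exist _ y yS.
have -> : y = val (f (g y')) by rewrite gK.
apply: f_edge; rewrite /K13_rel /= andbT.
by apply: contraNneq yc => g0; rewrite g0 gK.
Qed.

Definition nonadj (u v : V) : bool := (u != v) && ~~ e u v.

Lemma nonadjC u v : nonadj u v = nonadj v u.
Proof. by rewrite /nonadj eq_sym e_sym. Qed.

Definition universal : {set V} := [set u | [forall v, ~~ nonadj u v]].

Lemma universalP u v : u \in universal -> u != v -> e u v.
Proof.
rewrite inE => /forallP /(_ v); rewrite /nonadj negb_and !negbK.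
by case/orP=> [/eqP -> | //]; rewrite eqxx.
Qed.

Lemma nonuniversalP u : u \notin universal -> exists v, nonadj u v.
Proof. by rewrite inE negb_forall => /existsP[v]; rewrite negbK; exists v. Qed.

Lemma card_quad {a b x y : V} :
  a != b -> a != x -> a != y -> b != x -> b != y -> x != y ->
  #|[set a; b; x; y]| = 4.
Proof.
move=> ab ax ay bx b_y xy.
by rewrite -!setUA !cardsU1 cards1 !inE !negb_or ab ax ay bx b_y xy.
Qed.

(* No four distinct vertices are covered by non-edges among themselves: the
   claw centre would have a non-neighbour in the set. *)
Lemma no_nonadj_cover (a b x y : V) :
  a != b -> a != x -> a != y -> b != x -> b != y -> x != y ->
  ~ (forall z, z \in [set a; b; x; y] -> exists2 d, d \in [set a; b; x; y] & nonadj z d).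
Proof.
move=> ab ax ay bx b_y xy cover.
have [c cS c_adj] := claw_center (card_quad ab ax ay bx b_y xy).
have [d dS /andP[cd]] := cover c cS.
by rewrite c_adj // eq_sym.
Qed.

Section NonEdge.
Variables a b : V.
Hypothesis ab : nonadj a b.

Let a_neq_b : a != b. Proof. by case/andP: ab. Qed.

Lemma nonuniversal_misses_pair x :
  x \notin universal -> x != a -> x != b -> nonadj x a || nonadj x b.
Proof.
move=> /nonuniversalP[d xd] xa xb.
have [<- | da] := eqVneq d a; first by rewrite xd.
have [<- | db] := eqVneq d b; first by rewrite xd orbT.
have xd' : x != d by case/andP: xd.
exfalso; apply: (no_nonadj_cover a b x d) => //;
  rewrite 1?eq_sym //.
move=> z; rewrite !inE -!orbA => /or4P[] /eqP ->.
- by exists b; rewrite ?inE ?eqxx ?orbT.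
- by exists a; rewrite ?inE ?eqxx ?orbT // nonadjC.
- by exists d; rewrite ?inE ?eqxx ?orbT.
- by exists x; rewrite ?inE ?eqxx ?orbT // nonadjC.
Qed.

Lemma nonuniversal_outside_pair : #|~: universal :\: [set a; b]| <= 1.
Proof.
have outside z : z \in ~: universal :\: [set a; b] ->
    [/\ z \notin universal, z != a & z != b].
  by rewrite in_setD in_setC in_set2 negb_or => /andP[/andP[]].
apply/card_le1_eqP => x y /outside[xW xa xb] /outside[yW ya yb].
apply/eqP/negPn/negP => xy.
apply: (no_nonadj_cover a b x y) => //; rewrite 1?eq_sym //.
have miss z : z \notin universal -> z != a -> z != b ->
    exists2 d, d \in [set a; b; x; y] & nonadj z d.
  by move=> zW za zb; case/orP: (nonuniversal_misses_pair z zW za zb) => h;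
    [exists a | exists b]; rewrite ?inE ?eqxx ?orbT.
move=> z; rewrite !inE -!orbA => /or4P[] /eqP ->.
- by exists b; rewrite ?inE ?eqxx ?orbT.
- by exists a; rewrite ?inE ?eqxx ?orbT // nonadjC.
- exact: miss xW xa xb.
- exact: miss yW ya yb.
Qed.

End NonEdge.

Lemma nonuniversal_small : #|~: universal| <= 3.
Proof.
have [W0 | [a aW]] := set_0Vmem (~: universal); first by rewrite W0 cards0.
have /nonuniversalP[b ab] : a \notin universal by rewrite -in_setC.
rewrite -(cardsID [set a; b]) -[3]/(2 + 1) leq_add ?nonuniversal_outside_pair //.
by apply: leq_trans (subset_leq_card (subsetIr _ _)) _; rewrite cards2; case: (a != b).
Qed.

End ClawCondition.

Theorem mainTheorem15 (V : finType) (e : rel V) :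
  simple_graph e ->
  4 <= #|V| ->
  (forall S : {set V}, #|S| = 4 -> contains_subgraph K13_rel (induced e S)) ->
  contains_subgraph (Kjoin_eps3_rel (#|V| - 3)) e.
Proof.
move=> [e_sym _] n4 claw4.
have few := @nonuniversal_small V e e_sym claw4.
apply: (@universal_join V e e_sym (universal V e)).
- exact: universalP.
- by rewrite leq_subLR -(cardsC (universal V e)) addnC leq_add2r.
- by rewrite subnK // ltnW.
Qed.
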